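(* Let $G$ be a compact abelian group with Haar probability $m_G$, $d$ a translation-invariant metric on $G$, and $T_gx=x+g$ an ergodic rotation. The graph joinings $\lambda_h=(x\mapsto(x,x+h))_\#m_G$, $h\in G$, all lie in one coordinate-isomorphism class, and $\Phi_{n,m}(\lambda_h)=\Phi_{n,m}(\lambda_{h'})$ for all $h,h'\in G$ and all $n,m\ge1$. Moreover, if $d(X_1,X_2)$ is non-degenerate (not a.s. constant) for independent Haar-distributed $X_1,X_2$, then $\Phi_{2,1}(\lambda_h)\ne\Phi_{2,1}(m_G\otimes m_G)$.
   Context: For $z_i=(x_i,y_i)\in G\times G$, $\mathcal D^X_{n,m}=(d(T_g^ax_i,T_g^bx_j))_{1\le i,j\le n,0\le a,b<m}$, $\mathcal D^Y_{n,m}=(d(T_g^ay_i,T_g^by_j))_{1\le i,j\le n,0\le a,b<m}$, $\Phi_{n,m}(\lambda)=\mathrm{Law}_{\lambda^{\otimes n}}(\mathcal D^X_{n,m},\mathcal D^Y_{n,m})$. $\mathrm{Aut}_{\rm md}$ of $(G,d,m_G,T_g)$ is the group of measure-space automorphisms $A$ of $(G,m_G)$ commuting with $T_g$ modulo null sets and with $d(Ax,Ax')=d(x,x')$ for $m_G\otimes m_G$-a.e. $(x,x')$. Two self-joinings $\lambda,\lambda'$ are coordinate-isomorphic if $\lambda'=(A\times B)_\#\lambda$ for some $A,B\in\mathrm{Aut}_{\rm md}$. *)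

From HB Require Import structures.
From mathcomp Require Import all_boot all_order all_algebra.
From mathcomp Require Import all_classical all_reals all_analysis.
Set Implicit Arguments. Unset Strict Implicit. Unset Printing Implicit Defensive.
Import Order.TTheory GRing.Theory Num.Theory.
Local Open Scope classical_set_scope.
Local Open Scope ring_scope.

Definition is_metric {R : realType} {T : Type} (d : T -> T -> R) :=
  [/\ (forall x y, 0 <= d x y),
      (forall x y, d x y = 0 <-> x = y),
      (forall x y, d x y = d y x) &
      (forall x y z, d x z <= d x y + d y z)].

Definition induces_topology {R : realType} {T : topologicalType} (d : T -> T -> R) :=
  forall (x : T) (U : set T),
    nbhs x U <-> exists2 e : R, 0 < e & [set y | d x y < e] `<=` U.

(* G made pointed (at 0), so as to carry the generated sigma-algebra *)
Definition pG (G : topologicalZmodType) : Type := G.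
HB.instance Definition _ (G : topologicalZmodType) := Choice.on (pG G).
HB.instance Definition _ (G : topologicalZmodType) := isPointed.Build (pG G) (0 : G).
Notation BorelG G := (g_sigma_algebraType (@open G : set (set (pG G)))).

Section defs.
Context {R : realType} {G : topologicalZmodType}.
Local Notation BorelG := (BorelG G).

Definition haar (m : set BorelG -> \bar R) :=
  forall (g : G) (A : set BorelG), measurable A ->
    m ((fun x : G => x + g) @^-1` A) = m A.

Definition ergodic (m : set BorelG -> \bar R) (T : G -> G) :=
  forall A : set BorelG, measurable A -> T @^-1` A = A ->
    m A = 0%E \/ m A = 1%E.

Definition graph_joining (m : set BorelG -> \bar R) (h : G) :
    set (BorelG * BorelG)%type -> \bar R :=
  fun E => m ((fun x : G => (x, x + h)) @^-1` E).

Definition selfjoining (m : set BorelG -> \bar R) (g : G)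
   (lam : set (BorelG * BorelG)%type -> \bar R) :=
  [/\ lam setT = 1%E,
      (forall A : set BorelG, measurable A -> lam (A `*` setT) = m A),
      (forall A : set BorelG, measurable A -> lam (setT `*` A) = m A) &
      (forall E : set (BorelG * BorelG)%type, measurable E ->
        lam ((fun p : G * G => (p.1 + g, p.2 + g)) @^-1` E) = lam E)].

Definition Aut_md (m : set BorelG -> \bar R) (d : G -> G -> R) (g : G) (A : G -> G) :=
  exists B : G -> G,
  measurable_fun (setT : set BorelG) (A : BorelG -> BorelG) /\
  measurable_fun (setT : set BorelG) (B : BorelG -> BorelG) /\
  (forall E : set BorelG, measurable E -> m (A @^-1` E) = m E) /\
  (forall E : set BorelG, measurable E -> m (B @^-1` E) = m E) /\
  {ae m, forall x : BorelG, B (A x) = x} /\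
  {ae m, forall x : BorelG, A (B x) = x} /\
  {ae m, forall x : BorelG, A (x + g) = A x + g} /\
  {ae (m \x m)%E, forall p : (BorelG * BorelG)%type,
      d (A p.1) (A p.2) = d p.1 p.2}.

Definition coord_iso (m : set BorelG -> \bar R) (d : G -> G -> R) (g : G)
   (lam lam' : set (BorelG * BorelG)%type -> \bar R) :=
  exists A B : G -> G, [/\ Aut_md m d g A, Aut_md m d g B &
    (forall E : set (BorelG * BorelG)%type, measurable E ->
      lam' E = lam ((fun p : G * G => (A p.1, B p.2)) @^-1` E))].

End defs.

(* n-fold product measure lam^{\otimes n} evaluated by iterated integration
   over sequences (z_1, ..., z_n) of length n *)
Fixpoint iprod d (T : measurableType d) (R : realType) (lam : set T -> \bar R)
    (n : nat) (F : seq T -> \bar R) : \bar R :=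
  match n with
  | 0 => F [::]
  | n'.+1 => (\int[lam]_z iprod lam n' (fun s => F (z :: s)))%E
  end.

Arguments iprod {d T R} lam n F.

Definition prodn d (T : measurableType d) (R : realType) (lam : set T -> \bar R)
    (n : nat) (A : set (seq T)) : \bar R :=
  iprod lam n (fun s => (\1_A s)%:E).

Arguments prodn {d T R} lam n A.

(* index set {1..n} x {0..m-1} *)
Definition Idx (n m : nat) := ('I_n * 'I_m)%type.
Definition Cod (R : realType) (n m : nat) :=
  ((Idx n m * Idx n m -> R) * (Idx n m * Idx n m -> R))%type.

(* Borel sigma-algebra of the (finite-dimensional) codomain: generated by
   coordinate preimages of Borel sets of R *)
Definition cod_cyl (R : realType) (n m : nat) : set (set (Cod R n m)) :=
  [set E | exists (k : Idx n m * Idx n m) (B : set R), measurable B /\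
     (E = [set P | B (P.1 k)] \/ E = [set P | B (P.2 k)])].

Definition cod_measurable (R : realType) (n m : nat) : set (set (Cod R n m)) :=
  <<s (@cod_cyl R n m) >>.

(* the pair (D^X_{n,m}, D^Y_{n,m}) computed from z = (z_1,...,z_n) *)
Definition dmats {R : realType} {G : topologicalZmodType} (d : G -> G -> R) (g : G) (n m : nat)
    (s : seq (G * G)) : Cod R n m :=
  ((fun ij : Idx n m * Idx n m =>
      d ((nth (0, 0) s ij.1.1).1 + g *+ ij.1.2)
            ((nth (0, 0) s ij.2.1).1 + g *+ ij.2.2)),
   (fun ij : Idx n m * Idx n m =>
      d ((nth (0, 0) s ij.1.1).2 + g *+ ij.1.2)
            ((nth (0, 0) s ij.2.1).2 + g *+ ij.2.2))).

Arguments dmats {R G} d g n m s.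

Definition Phi {R : realType} {G : topologicalZmodType} (d : G -> G -> R) (g : G) (n m : nat)
    (lam : set (BorelG G * BorelG G)%type -> \bar R) : set (Cod R n m) -> \bar R :=
  fun B => prodn lam n (dmats d g n m @^-1` B).

Arguments Phi {R G} d g n m lam _.

Definition Phi_eq {R : realType} {G : topologicalZmodType} (d : G -> G -> R) (g : G) (n m : nat)
    (lam lam' : set (BorelG G * BorelG G)%type -> \bar R) :=
  forall B : set (Cod R n m), @cod_measurable R n m B -> Phi d g n m lam B = Phi d g n m lam' B.
Arguments Phi_eq {R G} d g n m lam lam'.

From HB Require Import structures.
From mathcomp Require Import all_boot all_order all_algebra.
From mathcomp Require Import all_classical all_reals all_analysis.
From mathcomp Require Import lra measurable_realfun.
Import Order.TTheory GRing.Theory Num.Theory.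
Import numFieldNormedType.Exports.
Local Open Scope classical_set_scope.
Local Open Scope ring_scope.

(* Translating the second coordinate by h' - h preserves m_G and d, commutes
   with T_g, carries the graph of x |-> x + h onto that of x |-> x + h' and
   leaves every entry of D^Y unchanged; hence all lambda_h are
   coordinate-isomorphic and have the same Phi_{n,m}.
   Under lambda_h the entries D^X_{12} = d(x_1, x_2) and
   D^Y_{12} = d(x_1 + h, x_2 + h) coincide, whereas under m_G (x) m_G they are
   independent with common law mu, the law of d(0, .) under m_G (by
   translation invariance). Equality of Phi_{2,1} thus forces
   mu(A) mu(R \ A) = 0 for every Borel A, so mu is a Dirac mass and d(X_1, X_2)
   is a.s. constant. Compactness (finite 1/n-nets) makes d jointly measurable
   for the product of the Borel sigma-algebras. *)

Section nnsfun_comp.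
Context d1 d2 (X : measurableType d1) (Y : measurableType d2) (R : realType).
Variables (phi : X -> Y) (mphi : measurable_fun setT phi) (h : {nnsfun Y >-> R}).
Import HBNNSimple.

Definition nnsfun_comp_fun : X -> R := h \o phi.

Let nnsfun_comp_measurable : measurable_fun setT nnsfun_comp_fun.
Proof. exact: measurableT_comp. Qed.
HB.instance Definition _ :=
  isMeasurableFun.Build _ _ _ _ nnsfun_comp_fun nnsfun_comp_measurable.

Let nnsfun_comp_finite : finite_set (range nnsfun_comp_fun).
Proof. by apply: sub_finite_set (fimfunP h) => _ [x _ <-]; exists (phi x). Qed.
HB.instance Definition _ :=
  FiniteImage.Build _ _ nnsfun_comp_fun nnsfun_comp_finite.

Let nnsfun_comp_ge0 x : 0 <= nnsfun_comp_fun x.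
Proof. exact: fun_ge0. Qed.
HB.instance Definition _ := isNonNegFun.Build _ _ nnsfun_comp_fun nnsfun_comp_ge0.

Definition nnsfun_comp : {nnsfun X >-> R} := nnsfun_comp_fun.

End nnsfun_comp.
Arguments nnsfun_comp {d1 d2 X Y R phi} mphi h.

Section pushforward_integral.
Local Open Scope ereal_scope.
Context {d1 d2} {X : measurableType d1} {Y : measurableType d2} {R : realType}.
Import HBNNSimple.

(* Unlike [ge0_integral_pushforward], no measurability of [f] is required
   (the integrands of [iprod] are not known to be measurable): every simple
   function below [f] pulls back along [phi] to one below [f \o phi]. *)
Lemma ge0_le_integral_pushforward (mu : {measure set X -> \bar R})
    (phi : X -> Y) (f : Y -> \bar R) :
  measurable_fun setT phi -> (forall y, 0 <= f y) ->
  \int[pushforward mu phi]_y f y <= \int[mu]_x f (phi x).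
Proof.
move=> mphi f0; rewrite !ge0_integralTE//.
apply: ge_ereal_sup => _ [h hf <-]; apply: ereal_sup_ubound.
by exists (nnsfun_comp mphi h) => // x; exact: hf.
Qed.

End pushforward_integral.
Arguments ge0_le_integral_pushforward {d1 d2 X Y R} mu {phi f}.

Section pushforward_integral_bij.
Local Open Scope ereal_scope.
Context {d1 d2} {X : measurableType d1} {Y : measurableType d2} {R : realType}.

Lemma ge0_integral_pushforward_bij (mu : {measure set X -> \bar R})
    (phi : X -> Y) (psi : Y -> X) (f : Y -> \bar R) :
  measurable_fun setT phi -> measurable_fun setT psi ->
  cancel phi psi -> cancel psi phi -> (forall y, 0 <= f y) ->
  \int[pushforward mu phi]_y f y = \int[mu]_x f (phi x).
Proof.
move=> mphi mpsi phiK psiK f0; apply/eqP.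
rewrite eq_le ge0_le_integral_pushforward//=.
have -> : \int[mu]_x f (phi x) =
    \int[pushforward (pushforward mu phi) psi]_x f (phi x).
  congr integral; apply/funext => A; rewrite /pushforward.
  by congr (mu _); apply/funext => x /=; rewrite phiK.
(* the measure structure of [pushforward mu phi] is parameterised by [mphi] *)
have /(_ mphi) le_psi :=
  ge0_le_integral_pushforward (pushforward mu phi) mpsi (fun x => f0 (phi x)).
by apply: le_trans le_psi _; under eq_integral do rewrite psiK.
Qed.

End pushforward_integral_bij.
Arguments ge0_integral_pushforward_bij {d1 d2 X Y R} mu {phi psi f}.

Section iprod.
Local Open Scope ereal_scope.
Context {d} {X : measurableType d} {R : realType}.

Lemma iprod_ge0 (mu : {measure set X -> \bar R}) n F :
  (forall s, 0 <= F s) -> 0 <= iprod mu n F.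
Proof.
by elim: n F => [|n IHn] F F0 //=; apply: integral_ge0 => z _; exact: IHn.
Qed.

Lemma eq_iprod (mu : set X -> \bar R) n F F' :
  (forall s, size s = n -> F s = F' s) -> iprod mu n F = iprod mu n F'.
Proof.
elim: n F F' => [|n IHn] F F' eqF /=; first exact: eqF.
congr integral; apply/funext => z; apply: IHn => s sz.
by apply: eqF; rewrite /= sz.
Qed.

End iprod.

Section iprod_pushforward.
Local Open Scope ereal_scope.
Context {d1 d2} {X : measurableType d1} {Y : measurableType d2} {R : realType}.

Lemma iprod_pushforward_bij (mu : {measure set X -> \bar R})
    (phi : X -> Y) (psi : Y -> X) n F :
  measurable_fun setT phi -> measurable_fun setT psi ->
  cancel phi psi -> cancel psi phi -> (forall s, 0 <= F s) ->
  iprod (pushforward mu phi) n F = iprod mu n (F \o map phi).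
Proof.
move=> mphi mpsi phiK psiK.
elim: n F => [|n IHn] F F0 //=.
transitivity (\int[pushforward mu phi]_z iprod mu n (fun s => F (z :: map phi s))).
  by congr integral; apply/funext => z; exact: IHn.
by rewrite (ge0_integral_pushforward_bij _ mphi mpsi)// => z; exact: iprod_ge0.
Qed.

Lemma iprod_pushforward_eq0 (mu : {measure set X -> \bar R}) (phi : X -> Y) n F :
  measurable_fun setT phi -> (forall s, 0 <= F s) ->
  (forall s, size s = n -> F (map phi s) = 0) ->
  iprod (pushforward mu phi) n F = 0.
Proof.
move=> mphi; elim: n F => [|n IHn] F F0 Fphi0 /=; first exact: (Fphi0 [::]).
apply/eqP; rewrite eq_le; apply/andP; split; last first.
  by apply: integral_ge0 => // z _; apply: iprod_ge0.
apply: le_trans (ge0_le_integral_pushforward mu mphi _) _.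
  by move=> z; exact: iprod_ge0.
rewrite (eq_integral (cst 0)) ?integral0// => x _.
by apply: IHn => // s sz; apply: (Fphi0 (x :: s)); rewrite /= sz.
Qed.

End iprod_pushforward.

Section zero_one_measure.
Context (R : realType) (mu : {measure set R -> \bar R}).
Hypotheses (mu_neq0 : mu setT != 0%E)
  (mu01 : forall A, measurable A -> mu A = 0%E \/ mu (~` A) = 0%E).

Let not_negligible_cover (F : (set R)^nat) :
  (forall n, mu.-negligible (F n)) -> \bigcup_n F n = setT -> False.
Proof.
move=> F0 FT; have := negligible_bigcup F0; rewrite FT.
by move/(negligibleP _ measurableT) => mu0; move: mu_neq0; rewrite mu0 eqxx.
Qed.

Let S := [set t : R | mu.-negligible `]-oo, t[].

Let S_le [t t'] : t' <= t -> S t -> S t'.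
Proof.
move=> t't; apply: negligibleS => x /=; rewrite !in_itv /= => xt'.
exact: lt_le_trans xt' t't.
Qed.

Let S_dichotomy t : S t \/ mu.-negligible (~` `]-oo, t[).
Proof.
have mI : measurable (`]-oo, t[%classic : set R) by [].
have mCI := measurableC mI.
by case: (mu01 _ mI) => ?; [left; apply/negligibleP|right; apply/negligibleP].
Qed.

Let bound_absP (x : R) : - (Num.bound `|x|)%:R < x < (Num.bound `|x|)%:R.
Proof.
by rewrite -ltr_norml; exact: archi_boundP.
Qed.

Let S_nonempty : S !=set0.
Proof.
apply: contrapT => noS.
apply: (not_negligible_cover (fun n => ~` `]-oo, - n%:R[)).
  move=> n; case: (S_dichotomy (- n%:R)) => // Sn.
  by exfalso; apply: noS; exists (- n%:R).
apply/seteqP; split => // x _; exists (Num.bound `|x|) => //=.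
by rewrite in_itv /= => xn; have := bound_absP x; lra.
Qed.

Let S_bounded : has_ubound S.
Proof.
apply: contrapT => noM.
apply: (not_negligible_cover (fun n => `]-oo, n%:R[%classic)).
  move=> n; apply: contrapT => nSn; apply: noM; exists n%:R => t St.
  by rewrite leNgt; apply/negP => nt; apply: nSn; exact: S_le (ltW nt) St.
apply/seteqP; split => // x _; exists (Num.bound `|x|) => //=.
by rewrite in_itv /=; case/andP: (bound_absP x).
Qed.

Let S_has_sup : has_sup S := conj S_nonempty S_bounded.

Let c := sup S.

Let negligible_ltc : mu.-negligible `]-oo, c[.
Proof.
have S_approx n : S (c - n.+1%:R^-1).
  have e0 : 0 < n.+1%:R^-1 :> R by [].
  have [t St ct] := sup_adherent e0 S_has_sup.
  exact: S_le (ltW ct) St.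
apply: negligibleS (negligible_bigcup S_approx) => x /=; rewrite in_itv /= => xc.
have [k xkc] := ltr_add_invr xc.
by exists k => //=; rewrite in_itv /= ltrBrDr.
Qed.

Let negligible_gtc : mu.-negligible `]c, +oo[.
Proof.
have notS_approx n : mu.-negligible (~` `]-oo, c + n.+1%:R^-1[).
  case: (S_dichotomy (c + n.+1%:R^-1)) => // /(sup_upper_bound S_has_sup).
  by rewrite -/c gerDl leNgt invr_gt0 ltr0Sn.
apply: negligibleS (negligible_bigcup notS_approx) => x /=.
rewrite in_itv /= andbT => cx; have [k ckx] := ltr_add_invr cx.
exists k => //=; rewrite in_itv /= => xck.
by have := lt_trans ckx xck; rewrite ltxx.
Qed.

Lemma measure_zero_one_dirac : exists c, mu (~` [set c]) = 0%E.
Proof.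
exists c; apply/negligibleP; first exact: measurableC (measurable_set1 c).
apply: negligibleS (negligibleU negligible_ltc negligible_gtc) => x /= /eqP.
by rewrite neq_lt => /orP[xc|cx]; [left|right]; rewrite /= in_itv /= ?xc ?cx.
Qed.

End zero_one_measure.

Section borel.
Context {R : realType} {G : topologicalZmodType}.
Local Notation BG := (BorelG G).

Lemma measurable_open (U : set G) : open U -> measurable (U : set BG).
Proof. exact: sub_sigma_algebra. Qed.

Lemma continuous_measurable_fun [f : G -> G] :
  continuous f -> measurable_fun setT (f : BG -> BG).
Proof.
move=> cf; apply: (@measurability _ _ BG BG setT f (@open G) erefl).
move=> _ [U oU <-]; rewrite setTI; apply: measurable_open.
exact: (continuousP _).1 cf _ oU.
Qed.

Lemma continuous_measurable_funR [f : G -> R] :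
  continuous f -> measurable_fun setT (f : BG -> R).
Proof.
move=> cf; apply: (@measurability _ _ BG R setT f _ (RGenOpens.measurableE R)).
move=> _ [_ [x [y ->]] <-]; rewrite setTI; apply: measurable_open.
exact: (continuousP _).1 cf _ (interval_open _ _).
Qed.

End borel.

(* [compact_cover] is only available for pointed spaces. *)
Definition pointedG (G : topologicalZmodType) : Type := G.
HB.instance Definition _ (G : topologicalZmodType) :=
  Topological.copy (pointedG G) G.
HB.instance Definition _ (G : topologicalZmodType) :=
  isPointed.Build (pointedG G) (0 : G).

Lemma eq_indic_iff {R : realType} (T1 T2 : Type) (A1 : set T1) (A2 : set T2) x1 x2 :
  (A1 x1 <-> A2 x2) -> \1_A1 x1 = \1_A2 x2 :> R.
Proof.
move=> A12; rewrite !indicE.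
by have -> : (x1 \in A1) = (x2 \in A2) by apply/idP/idP; rewrite !inE => /A12.
Qed.

(* the entry (i, a; j, b) = (1, 0; 2, 0) of D^X and D^Y *)
Definition k12 : Idx 2 1 * Idx 2 1 := ((ord0, ord0), (ord_max, ord0)).

Definition disagree12 {R : realType} (A : set R) : set (Cod R 2 1) :=
  [set P | A (P.1 k12) /\ ~ A (P.2 k12)].

Lemma cod_measurable_disagree12 {R : realType} [A : set R] :
  measurable A -> cod_measurable (disagree12 A).
Proof.
move=> mA; have -> : disagree12 A = setT `\` \bigcup_i (bigcup2
    [set P : Cod R 2 1 | (~` A) (P.1 k12)] [set P : Cod R 2 1 | A (P.2 k12)]) i.
  rewrite bigcup2E; apply/seteqP; split => [P [AP1 nAP2]|P [_ nP]].
  - by split => // -[]; [apply|].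
  - split; last by move=> AP2; apply: nP; right.
    by apply: contrapT => nAP1; apply: nP; left.
apply: sigma_algebraCD; apply: sigma_algebra_bigcup => -[|[|i]] /=.
- apply: sub_sigma_algebra; exists k12, (~` A).
  by split; [exact: measurableC|left].
- by apply: sub_sigma_algebra; exists k12, A; split => //; right.
- exact: sigma_algebra0.
Qed.

Section translation_invariant_metric.
Context {R : realType} {G : topologicalZmodType} {d : G -> G -> R}.
Hypotheses (d_metric : is_metric d) (d_top : induces_topology d)
  (d_inv : forall x y z : G, d (x + z) (y + z) = d x y).
Local Notation BG := (BorelG G).

Lemma d_sym x y : d x y = d y x. Proof. by case: d_metric. Qed.
Lemma d_triangle x y z : d x z <= d x y + d y z. Proof. by case: d_metric. Qed.
Lemma d_xx x : d x x = 0. Proof. by case: d_metric => _ d0 _ _; exact/d0. Qed.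

Lemma continuous_d a : continuous (d a).
Proof.
move=> x; apply/cvgrPdist_lt => e e0.
have : nbhs x [set y | d x y < e] by apply/d_top; exists e.
apply: filterS => y /= dxy; rewrite ltr_norml.
have := d_triangle a x y; have := d_triangle a y x; rewrite (d_sym y x).
by move=> ? ?; apply/andP; split; lra.
Qed.

Lemma open_dball a e : open [set y | d a y < e].
Proof. by have := (continuousP _).1 (continuous_d a) _ (@open_lt R e). Qed.

Lemma continuous_addr t : continuous (fun x : G => x + t).
Proof.
move=> x U /d_top [e e0 sU]; apply/d_top; exists e => // y dxy.
by apply: sU; rewrite /= d_inv.
Qed.

Lemma measurable_d a : measurable_fun setT (d a : BG -> R).
Proof. exact: continuous_measurable_funR (continuous_d a). Qed.

Lemma measurable_addr t : measurable_fun setT (fun x : BG => (x + t : BG)).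
Proof. exact: continuous_measurable_fun (continuous_addr t). Qed.

Hypothesis G_compact : compact [set: G].

Lemma finite_dnets : exists s : nat -> seq G,
  forall n x, exists2 a, a \in s n & d a x < n.+1%:R^-1.
Proof.
suff /choice[s sP] : forall n, exists s : seq G,
    forall x, exists2 a, a \in s & d a x < n.+1%:R^-1 by exists s.
move=> n; have : cover_compact [set: pointedG G] by rewrite -compact_cover.
case/(_ G setT (fun a => [set y | d a y < n.+1%:R^-1])).
- by move=> a _; exact: open_dball.
- by move=> x _; exists x => //=; rewrite d_xx.
move=> D _ Dcover; exists (finmap.enum_fset D) => x.
by have [a] := Dcover x I; exists a.
Qed.

Lemma measurable_d2 : measurable_fun setT (fun p : BG * BG => d p.1 p.2).
Proof.
have [s sP] := finite_dnets.
apply: (@measurability _ _ (BG * BG)%type R setT _ _ (RGenInftyO.measurableE R)).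
move=> _ [_ [r ->] <-]; rewrite setTI.
have -> : (fun p : BG * BG => d p.1 p.2) @^-1` `]-oo, r[ =
    \bigcup_n \big[setU/set0]_(a <- s n)
      ([set x : BG | d a x < n.+1%:R^-1] `*` [set y : BG | d a y < r - n.+1%:R^-1]).
  apply/seteqP; split => [[x y]|[x y] [n _]] /=.
  - rewrite in_itv /= => dxy.
    have [k] : exists k, 0 + k.+1%:R^-1 < (r - d x y) / 2.
      by apply: ltr_add_invr; rewrite divr_gt0// subr_gt0.
    rewrite add0r => ke; have [a ask dax] := sP k x.
    exists k => //; rewrite -bigcup_seq; exists a => //=; split => //.
    have := d_triangle a x y; move: ke dax; move: (k.+1%:R^-1) => e; lra.
  - rewrite -bigcup_seq => -[a _ [/= dax day]]; rewrite in_itv /=.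
    have := d_triangle x a y; rewrite (d_sym x a); move: dax day.
    move: (n.+1%:R^-1) => e; lra.
apply: bigcupT_measurable => n; apply: bigsetU_measurable => a _.
by apply: measurableX; apply: measurable_open; exact: open_dball.
Qed.

Variable mG : probability BG R.
Hypothesis mG_haar : haar mG.
Local Notation dlaw := (pushforward mG (d 0)).

Let mG_setT : mG setT = 1%E. Proof. exact: probability_setT. Qed.

Lemma measurable_dpre x [A : set R] :
  measurable A -> measurable [set w : BG | A (d x w)].
Proof. by move=> mA; have := measurable_d x measurableT _ mA; rewrite setTI. Qed.

Lemma haar_dpre x [A : set R] :
  measurable A -> mG [set w : BG | A (d x w)] = dlaw A.
Proof.
move=> mA; rewrite /pushforward -(mG_haar (- x) _ (measurable_dpre 0 mA)).
by congr (mG _); apply/seteqP; split => w /=; rewrite -(d_inv x w (- x)) subrr.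
Qed.

Lemma product_measure_dpre [A : set R] :
  measurable A -> (mG \x mG)%E [set p | A (d p.1 p.2)] = dlaw A.
Proof.
move=> mA; rewrite /product_measure1 /=.
transitivity (\int[mG]_x dlaw A)%E.
  apply: eq_integral => x _; rewrite -(haar_dpre x mA); congr (mG _).
  by apply/seteqP; split => w; rewrite /xsection /= inE.
by rewrite integral_cst// [X in (_ * X)%E]mG_setT mule1.
Qed.

Lemma ae_d_const c : dlaw (~` [set c]) = 0%E ->
  {ae (mG \x mG)%E, forall p : BG * BG, d p.1 p.2 = c}.
Proof.
have mc := measurableC (measurable_set1 c).
move=> dc; exists [set p : BG * BG | (~` [set c]) (d p.1 p.2)]; split => //.
- by have := measurable_d2 measurableT _ mc; rewrite setTI.
- by rewrite product_measure_dpre.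
Qed.

Variable g : G.

Local Notation graph h := (fun x : BG => ((x, x + h) : BG * BG)).
Local Notation shift_snd t := (fun p : BG * BG => ((p.1, p.2 + t) : BG * BG)).

Lemma measurable_graph h : measurable_fun setT (graph h).
Proof.
by apply: measurable_fun_pair; [exact: measurable_id|exact: measurable_addr].
Qed.

Lemma measurable_shift_snd t : measurable_fun setT (shift_snd t).
Proof.
apply: measurable_fun_pair; first exact: measurable_fst.
exact: measurableT_comp (measurable_addr t) measurable_snd.
Qed.

Lemma graph_joining_selfjoining h : selfjoining mG g (graph_joining mG h).
Proof.
split.
- by rewrite /graph_joining preimage_setT mG_setT.
- move=> A mA; rewrite /graph_joining; congr (mG _).
  by apply/seteqP; split => x /=; [case|split].
- move=> A mA; rewrite /graph_joining -(mG_haar h _ mA); congr (mG _).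
  by apply/seteqP; split => x /=; [case|split].
- move=> E mE; rewrite /graph_joining.
  have mE' : measurable (graph h @^-1` E).
    by have := measurable_graph h measurableT _ mE; rewrite setTI.
  rewrite -(mG_haar g _ mE'); congr (mG _).
  by apply/seteqP; split => x /=; rewrite addrAC.
Qed.

Lemma Aut_md_addr t : Aut_md mG d g (fun x => x + t).
Proof.
exists (fun x => x - t).
do 2 (split; first exact: measurable_addr).
do 2 (split; first by move=> E mE; exact: mG_haar).
split; first by apply: aeW => x; rewrite addrK.
split; first by apply: aeW => x; rewrite addrNK.
split; first by apply: aeW => x; rewrite addrAC.
by apply: aeW => p; rewrite d_inv.
Qed.

Lemma graph_joining_coord_iso h h' :
  coord_iso mG d g (graph_joining mG h) (graph_joining mG h').
Proof.
exists (fun x => x + 0), (fun x => x + (h' - h)); split; try exact: Aut_md_addr.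
move=> E mE; rewrite /graph_joining; congr (mG _).
by apply/seteqP; split => x /=; rewrite addr0 -addrA (addrC h) addrNK.
Qed.

Lemma dmats_shift_snd t n m (s : seq (G * G)) : size s = n ->
  dmats d g n m [seq (z.1, z.2 + t) | z <- s] = dmats d g n m s.
Proof.
move=> sz; rewrite /dmats; congr pair; apply/funext => ij.
  by rewrite !(nth_map (0, 0)) ?sz.
by rewrite !(nth_map (0, 0)) ?sz //= !(addrAC _ t) d_inv.
Qed.

Lemma Phi_graph_joining h h' n m B :
  Phi d g n m (graph_joining mG h') B = Phi d g n m (graph_joining mG h) B.
Proof.
have -> : graph_joining mG h' =
    pushforward (pushforward mG (graph h)) (shift_snd (h' - h)).
  apply/funext => E; rewrite /graph_joining /pushforward; congr (mG _).
  by apply/seteqP; split => x /=; rewrite -addrA (addrC h) addrNK.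
have mgraph := measurable_graph h.
have mshift := measurable_shift_snd (h' - h).
have mshiftN := measurable_shift_snd (- (h' - h)).
rewrite /Phi /prodn (iprod_pushforward_bij _ _ (shift_snd (- (h' - h)))) //.
- apply: eq_iprod => s sz; congr (_%:E); apply: eq_indic_iff.
  by rewrite /preimage /= dmats_shift_snd.
- by move=> [x y]; rewrite /= addrK.
- by move=> [x y]; rewrite /= addrNK.
Qed.

Lemma Phi_graph_joining_disagree12 h (A : set R) :
  Phi d g 2 1 (graph_joining mG h) (disagree12 A) = 0%E.
Proof.
rewrite /Phi /prodn; apply: iprod_pushforward_eq0 => //.
- exact: measurable_graph.
- case=> [|x1 [|x2 []]] //= _; rewrite indicE.
  suff /negbTE -> : [:: (x1, x1 + h); (x2, x2 + h)] \notin
      dmats d g 2 1 @^-1` disagree12 A by [].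
  by rewrite notin_setE /preimage /disagree12 /dmats /= !mulr0n !addr0 d_inv => -[].
Qed.

Lemma Phi_product_disagree12 [A : set R] : measurable A ->
  Phi d g 2 1 (mG \x mG)%E (disagree12 A) = (dlaw A * dlaw (~` A))%E.
Proof.
move=> mA; have mCA := measurableC mA.
rewrite /Phi /prodn /=.
transitivity (\int[mG \x mG]_z (dlaw A * dlaw (~` A)))%E.
  apply: eq_integral => z1 _.
  rewrite (eq_integral (fun z2 => (\1_([set w : BG | A (d z1.1 w)] `*`
      [set w : BG | (~` A) (d z1.2 w)]) z2)%:E)); last first.
    move=> z2 _; congr (_%:E); apply: eq_indic_iff.
    by rewrite /dmats /disagree12 /= !mulr0n !addr0.
  rewrite integral_indic// ?setIT; last first.
    exact: measurableX (measurable_dpre _ mA) (measurable_dpre _ mCA).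
  apply: eq_trans (@product_measure1E _ _ _ _ R mG mG _ _ (measurable_dpre z1.1 mA)
    (measurable_dpre z1.2 mCA)) _.
  by congr (_ * _)%E; exact: haar_dpre.
apply: eq_trans (integral_cst (mG \x mG)%E measurableT _) _.
rewrite -[RHS]mule1; congr (_ * _)%E.
apply: eq_trans (product_measure_dpre measurableT) _.
by rewrite /pushforward preimage_setT.
Qed.

Lemma Phi_eq_graph_product_dirac [h] :
  Phi_eq d g 2 1 (graph_joining mG h) (mG \x mG)%E ->
  exists c, dlaw (~` [set c]) = 0%E.
Proof.
move=> PhiE; have dlaw_neq0 : dlaw setT != 0%E.
  by rewrite /pushforward preimage_setT mG_setT oner_neq0.
have dlaw01 A : measurable A -> dlaw A = 0%E \/ dlaw (~` A) = 0%E.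
  move=> mA; have := PhiE _ (cod_measurable_disagree12 mA).
  rewrite Phi_graph_joining_disagree12 Phi_product_disagree12//.
  by move=> /esym/eqP; rewrite mule_eq0 => /orP[] /eqP; [left|right].
have md0 := measurable_d 0.
by apply: measure_zero_one_dirac; [exact: dlaw_neq0|exact: dlaw01].
Qed.

End translation_invariant_metric.

Theorem proposition21 (R : realType) (G : topologicalZmodType)
  (G_hausdorff : hausdorff_space G) (G_compact : compact [set: G])
  (d : G -> G -> R) (d_metric : is_metric d) (d_top : induces_topology d)
  (d_inv : forall x y z : G, d (x + z) (y + z) = d x y)
  (mG : probability (BorelG G) R) (mG_haar : haar mG)
  (g : G) (T_ergodic : ergodic mG (fun x : G => x + g)) :
  (forall h : G, selfjoining mG g (graph_joining mG h)) /\
  (forall h h' : G, coord_iso mG d g (graph_joining mG h) (graph_joining mG h')) /\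
  (forall (h h' : G) (n m : nat), (0 < n)%N -> (0 < m)%N ->
     Phi_eq d g n m (graph_joining mG h) (graph_joining mG h')) /\
  (forall h : G,
     ~ (exists c : R, {ae (mG \x mG)%E, forall p : (BorelG G * BorelG G)%type,
          d p.1 p.2 = c}) ->
     ~ Phi_eq d g 2 1 (graph_joining mG h) (mG \x mG)%E).
Proof.
split; first by move=> h; apply: graph_joining_selfjoining.
split; first by move=> h h'; apply: graph_joining_coord_iso.
split; first by move=> h h' n m _ _ B _; exact: Phi_graph_joining.
move=> h d_nonconst PhiE; apply: d_nonconst.
have [c dc] := Phi_eq_graph_product_dirac d_metric d_top d_inv mG mG_haar g PhiE.
by exists c; apply: ae_d_const.
Qed.
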